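(* Every convex subset of $\mathbb{R}^2$ is closed-disk drawable.
   Context: For $A\subseteq\mathbb{R}^2$ let $N_{\le}(A)=\{x\in\mathbb{R}^2: |x-a|\le 1 \text{ for some } a\in A\}$. Let $\mathcal{D}_{\le,1}=\{N_{\le}(A_1): A_1\subseteq\mathbb{R}^2\}$ and for $n\ge 2$ let $\mathcal{D}_{\le,n}=\{D\cup N_{\le}(A_n): D\in\mathcal{D}_{\le,n-1}, A_n\subseteq\mathbb{R}^2\}$ if $n$ is odd and $\mathcal{D}_{\le,n}=\{D\setminus N_{\le}(A_n): D\in\mathcal{D}_{\le,n-1}, A_n\subseteq\mathbb{R}^2\}$ if $n$ is even. A set is closed-disk drawable if it lies in $\mathcal{D}_{\le}=\bigcup_{n\ge1}\mathcal{D}_{\le,n}$. *)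

From Stdlib Require Import Reals.
Open Scope R_scope.

Definition pt := (R * R)%type.
Definition pset := pt -> Prop.

Definition dist2 (x a : pt) : R :=
  sqrt ((fst x - fst a)^2 + (snd x - snd a)^2).

Definition Nle (A : pset) : pset :=
  fun x => exists a, A a /\ dist2 x a <= 1.

(* Dle n S  :<->  S belongs to D_{<=,n}  (D_{<=,0} is empty; sets are
   compared extensionally). *)
Fixpoint Dle (n : nat) : pset -> Prop :=
  match n with
  | O => fun _ => False
  | S O => fun S0 => exists A : pset, forall x, S0 x <-> Nle A x
  | S m as k => fun S0 => exists (D A : pset), Dle m D /\
      (forall x, S0 x <->
         (if Nat.even k then (D x /\ ~ Nle A x) else (D x \/ Nle A x)))
  end.

Definition closed_disk_drawable (S0 : pset) : Prop :=
  exists n, (1 <= n)%nat /\ Dle n S0.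

Definition convex (C : pset) : Prop :=
  forall x y t, C x -> C y -> 0 <= t <= 1 ->
    C (t * fst x + (1 - t) * fst y, t * snd x + (1 - t) * snd y).

(* A convex set C equals N(C) minus N(A), where A is the set of points at
   distance more than 1 from every point of C. A point x outside C is weakly separated from C by a
   line (C need not be closed): all of C lies in a closed half-plane whose
   boundary passes through x.
   The point at distance 1 from x along the outer unit normal is then at
   distance more than 1 from every point of C, so x lies in N(A). *)

From Stdlib Require Import Reals Lra Psatz Classical.
Open Scope R_scope.

Definition comb (t : R) (x y : pt) : pt :=
  (t * fst x + (1 - t) * fst y, t * snd x + (1 - t) * snd y).

Lemma convex_mem_comb (C : pset) x y t p1 p2 :
  convex C -> C x -> C y -> 0 <= t <= 1 ->
  p1 = t * fst x + (1 - t) * fst y -> p2 = t * snd x + (1 - t) * snd y ->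
  C (p1, p2).
Proof. intros HC Hx Hy Ht -> ->. now apply HC. Qed.

Lemma convex_preimage (f : pt -> pt) (C : pset) :
  (forall t x y, f (comb t x y) = comb t (f x) (f y)) ->
  convex C -> convex (fun p => C (f p)).
Proof.
  intros Hf HC x y t Hx Hy Ht.
  change (C (f (comb t x y))). rewrite Hf. now apply HC.
Qed.

Lemma div_in_unit_interval a b : 0 <= a <= b -> 0 < b -> 0 <= a / b <= 1.
Proof.
  intros Hab Hb.
  assert (Hdiv : a / b * b = a) by (field; lra).
  split; nra.
Qed.

Lemma convex_axis_one_side (C : pset) :
  convex C -> ~ C (0, 0) ->
  (forall w, C (w, 0) -> 0 < w) \/ (forall w, C (w, 0) -> w < 0).
Proof.
  intros HC H0.
  destruct (classic (exists w, C (w, 0) /\ w < 0)) as [[w' [Hw' Hneg]]|Hnone].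
  - right. intros w Hw.
    destruct (Rlt_or_le w 0) as [h|h]; [exact h|]. exfalso. apply H0.
    apply (convex_mem_comb C (w', 0) (w, 0) (w / (w - w'))); auto; simpl.
    + apply div_in_unit_interval; lra.
    + field. lra.
    + ring.
  - left. intros w Hw.
    destruct (Rtotal_order w 0) as [h|[h|h]]; [exfalso; eauto | subst; contradiction | exact h].
Qed.

Lemma convex_axis_crossing (C : pset) p1 p2 q1 q2 :
  convex C -> C (p1, p2) -> C (q1, q2) -> q2 < 0 < p2 ->
  C ((p2 * q1 - q2 * p1) / (p2 - q2), 0).
Proof.
  intros HC Hp Hq Hsides.
  apply (convex_mem_comb C (p1, p2) (q1, q2) (- q2 / (p2 - q2))); auto; simpl.
  - apply div_in_unit_interval; lra.
  - field. lra.
  - field. lra.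
Qed.

Lemma convex_axis_pos_slope_le (C : pset) :
  convex C -> (forall w, C (w, 0) -> 0 < w) ->
  forall p1 p2 q1 q2, C (p1, p2) -> 0 < p2 -> C (q1, q2) -> q2 < 0 ->
  q1 / q2 <= p1 / p2.
Proof.
  intros HC Haxis p1 p2 q1 q2 Hp Hp2 Hq Hq2.
  assert (Hcross := Haxis _ (convex_axis_crossing C p1 p2 q1 q2 HC Hp Hq (conj Hq2 Hp2))).
  assert (Hdet : 0 < p2 * q1 - q2 * p1).
  { replace (p2 * q1 - q2 * p1) with ((p2 * q1 - q2 * p1) / (p2 - q2) * (p2 - q2))
      by (field; lra).
    apply Rmult_lt_0_compat; lra. }
  assert (Hdiff : p1 / p2 - q1 / q2 = (p2 * q1 - q2 * p1) / (p2 * - q2)) by (field; lra).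
  assert (0 < (p2 * q1 - q2 * p1) / (p2 * - q2)) by (apply Rdiv_lt_0_compat; nra).
  lra.
Qed.

(* The separating line is p1 = lam * p2, where lam is the supremum of the
   ratios q1 / q2 over the points of C below the axis. *)
Lemma separate_origin_of_slopes (C : pset) :
  (forall w, C (w, 0) -> 0 < w) ->
  (forall p1 p2 q1 q2, C (p1, p2) -> 0 < p2 -> C (q1, q2) -> q2 < 0 ->
     q1 / q2 <= p1 / p2) ->
  exists u1 u2, (u1 <> 0 \/ u2 <> 0) /\
    forall p1 p2, C (p1, p2) -> p1 * u1 + p2 * u2 <= 0.
Proof.
  intros Haxis Hslope.
  destruct (classic (exists q1 q2, C (q1, q2) /\ q2 < 0)) as [[d1 [d2 [Hd Hd2]]]|Hbelow].
  2:{ exists 0, (-1). split; [right; lra|]. intros p1 p2 Hp.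
      destruct (Rlt_or_le p2 0) as [h|h]; [exfalso; eauto | lra]. }
  destruct (classic (exists p1 p2, C (p1, p2) /\ 0 < p2)) as [[c1 [c2 [Hc Hc2]]]|Habove].
  2:{ exists 0, 1. split; [right; lra|]. intros p1 p2 Hp.
      destruct (Rlt_or_le 0 p2) as [h|h]; [exfalso; eauto | lra]. }
  set (E := fun r => exists q1 q2, C (q1, q2) /\ q2 < 0 /\ r = q1 / q2).
  destruct (completeness E) as [lam [Hub Hlub]].
  { exists (c1 / c2). intros r (q1 & q2 & Hq & Hq2 & ->). now apply Hslope. }
  { exists (d1 / d2), d1, d2. auto. }
  exists (-1), lam. split; [left; lra|].
  intros p1 p2 Hp.
  destruct (Rtotal_order p2 0) as [h|[h|h]].
  - assert (p1 / p2 <= lam) by (apply Hub; exists p1, p2; auto).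
    assert (p2 * (p1 / p2) = p1) by (field; lra).
    nra.
  - subst. specialize (Haxis _ Hp). lra.
  - assert (lam <= p1 / p2).
    { apply Hlub. intros r (q1 & q2 & Hq & Hq2 & ->). now apply Hslope. }
    assert (p2 * (p1 / p2) = p1) by (field; lra).
    nra.
Qed.

Lemma convex_separate_origin_axis_pos (C : pset) :
  convex C -> (forall w, C (w, 0) -> 0 < w) ->
  exists u1 u2, (u1 <> 0 \/ u2 <> 0) /\
    forall p1 p2, C (p1, p2) -> p1 * u1 + p2 * u2 <= 0.
Proof.
  intros HC Haxis.
  apply separate_origin_of_slopes; [exact Haxis|].
  exact (convex_axis_pos_slope_le C HC Haxis).
Qed.

Lemma convex_separate_origin (C : pset) :
  convex C -> ~ C (0, 0) ->
  exists u1 u2, (u1 <> 0 \/ u2 <> 0) /\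
    forall p1 p2, C (p1, p2) -> p1 * u1 + p2 * u2 <= 0.
Proof.
  intros HC H0.
  destruct (convex_axis_one_side C HC H0) as [Hpos|Hneg].
  - exact (convex_separate_origin_axis_pos C HC Hpos).
  - set (C' := fun p : pt => C (- fst p, snd p)).
    assert (HC' : convex C').
    { apply (convex_preimage (fun p => (- fst p, snd p))); [|exact HC].
      intros t x y. unfold comb; simpl. f_equal; ring. }
    destruct (convex_separate_origin_axis_pos C' HC') as [u1 [u2 [Hu Hsep]]].
    { intros w Hw. specialize (Hneg (- w) Hw). lra. }
    exists (- u1), u2. split; [destruct Hu; [left|right]; lra|].
    intros p1 p2 Hp.
    assert (Hp' : C' (- p1, p2)) by (unfold C'; simpl; now rewrite Ropp_involutive).
    specialize (Hsep _ _ Hp'). lra.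
Qed.

Lemma convex_separate_point (C : pset) x1 x2 :
  convex C -> ~ C (x1, x2) ->
  exists e1 e2, e1 ^ 2 + e2 ^ 2 = 1 /\
    forall z1 z2, C (z1, z2) -> (z1 - x1) * e1 + (z2 - x2) * e2 <= 0.
Proof.
  intros HC Hx.
  set (C' := fun p : pt => C (fst p + x1, snd p + x2)).
  assert (HC' : convex C').
  { apply (convex_preimage (fun p => (fst p + x1, snd p + x2))); [|exact HC].
    intros t x y. unfold comb; simpl. f_equal; ring. }
  destruct (convex_separate_origin C' HC') as [u1 [u2 [Hu Hsep]]].
  { unfold C'; simpl. now rewrite !Rplus_0_l. }
  assert (Hpos : 0 < u1 ^ 2 + u2 ^ 2) by (destruct Hu; nra).
  set (n := sqrt (u1 ^ 2 + u2 ^ 2)).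
  assert (Hn : 0 < n) by (apply sqrt_lt_R0; exact Hpos).
  assert (Hn2 : n * n = u1 ^ 2 + u2 ^ 2) by (apply sqrt_sqrt; lra).
  exists (u1 / n), (u2 / n). split.
  - field_simplify; [|lra]. rewrite <- Hn2. field. lra.
  - intros z1 z2 Hz.
    assert (Hz' : C' (z1 - x1, z2 - x2)).
    { unfold C'; simpl. now replace (z1 - x1 + x1) with z1 by ring;
        replace (z2 - x2 + x2) with z2 by ring. }
    specialize (Hsep _ _ Hz').
    replace ((z1 - x1) * (u1 / n) + (z2 - x2) * (u2 / n))
      with (((z1 - x1) * u1 + (z2 - x2) * u2) / n) by (field; lra).
    assert (0 < / n) by (apply Rinv_0_lt_compat; lra).
    unfold Rdiv. nra.
Qed.

Lemma dist2_refl x : dist2 x x = 0.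
Proof.
  unfold dist2. replace ((fst x - fst x) ^ 2 + (snd x - snd x) ^ 2) with 0 by ring.
  apply sqrt_0.
Qed.

Lemma dist2_unit_shift x1 x2 e1 e2 :
  e1 ^ 2 + e2 ^ 2 = 1 -> dist2 (x1, x2) (x1 + e1, x2 + e2) = 1.
Proof.
  intros He. unfold dist2; cbn [fst snd].
  replace ((x1 - (x1 + e1)) ^ 2 + (x2 - (x2 + e2)) ^ 2) with (e1 ^ 2 + e2 ^ 2) by ring.
  now rewrite He, sqrt_1.
Qed.

Lemma dist2_gt1_across_line z1 z2 x1 x2 e1 e2 :
  e1 ^ 2 + e2 ^ 2 = 1 -> (z1 - x1) * e1 + (z2 - x2) * e2 <= 0 ->
  (z1, z2) <> (x1, x2) -> 1 < dist2 (z1, z2) (x1 + e1, x2 + e2).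
Proof.
  intros He Hside Hne. unfold dist2; cbn [fst snd].
  assert (Hzx : 0 < (z1 - x1) ^ 2 + (z2 - x2) ^ 2).
  { rewrite <- !Rsqr_pow2.
    destruct (Req_dec (z1 - x1) 0) as [h1|h1].
    - assert (h2 : z2 - x2 <> 0) by (intros h2; apply Hne; f_equal; lra).
      pose proof (Rsqr_pos_lt _ h2). pose proof (Rle_0_sqr (z1 - x1)). lra.
    - pose proof (Rsqr_pos_lt _ h1). pose proof (Rle_0_sqr (z2 - x2)). lra. }
  rewrite <- sqrt_1. apply sqrt_lt_1; nra.
Qed.

Definition far (C : pset) : pset := fun y => forall z, C z -> 1 < dist2 z y.

Lemma Nle_far_of_not_mem (C : pset) x :
  convex C -> ~ C x -> Nle (far C) x.
Proof.
  destruct x as [x1 x2]. intros HC Hx.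
  destruct (convex_separate_point C x1 x2 HC Hx) as [e1 [e2 [He Hsep]]].
  exists (x1 + e1, x2 + e2). split.
  - intros [z1 z2] Hz. apply dist2_gt1_across_line; auto.
    intros Heq. rewrite Heq in Hz. contradiction.
  - rewrite dist2_unit_shift by exact He. lra.
Qed.

Lemma convex_eq_Nle_minus_Nle_far (C : pset) :
  convex C -> forall x, C x <-> Nle C x /\ ~ Nle (far C) x.
Proof.
  intros HC x. split.
  - intros Hx. split.
    + exists x. rewrite dist2_refl. split; [exact Hx | lra].
    + intros [a [Ha Hd]]. specialize (Ha _ Hx). lra.
  - intros [_ Hfar]. apply NNPP. intros Hx.
    exact (Hfar (Nle_far_of_not_mem C x HC Hx)).
Qed.

Theorem theorem2p4 : forall C : pset, convex C -> closed_disk_drawable C.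
Proof.
  intros C HC. exists 2%nat. split; [auto|]. simpl.
  exists (Nle C), (far C). split.
  - exists C. tauto.
  - exact (convex_eq_Nle_minus_Nle_far C HC).
Qed.
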